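(* Let $\tilde F:E^c\to E^c$ be $\Gamma$-equivariant, and let $f$ and $h$ denote its $z_1$- and $w_1$-components, respectively (so $\tilde F=[f,h]$). Then $R_\phi\tilde F(\Phi)=\tilde F(R_\phi\Phi)$ for all $\Phi\in E^c\cap R_{-\phi}E^c=\{(z_1,z_2,0,w_2,w_3,0)\}$ if and only if $$f(z_1,z_2,0,w_2,w_3,0)=h(w_2,w_3,z_1,0,0,\bar z_2)\quad\text{for all }z_1,z_2,w_2,w_3\in\mathbb C,$$ equivalently $h(z_1,z_2,w_1,0,0,w_4)=f(w_1,\bar w_4,0,z_1,z_2,0)$ for all $z_1,z_2,w_1,w_4$.
   Context: $[4,8]$ mode interaction: integers $l_1>l_2>n_2>0$ with $l_1^2=l_2^2+n_2^2$. Wave vectors $q_1=(l_1,0)$, $q_2=(0,l_1)$, $p_1=(l_2,n_2)$, $p_2=(l_2,-n_2)$, $p_3=(n_2,l_2)$, $p_4=(n_2,-l_2)$; $\tilde A=\{\pm q_i,\pm p_j\}$. $E^c$ is the real space of functions $a$ supported in $\tilde A$ with $a(-k)=\overline{a(k)}$, with coordinates $(z_1,z_2,w_1,\dots,w_4)$, $z_i=a(q_i)$, $w_j=a(p_j)$. Group actions on functions: $(\gamma a)(k)=a(\gamma^{-1}k)$ for $\gamma\in O(2)$, $(T_{s,t}a)(k)=e^{-i(sk_x+tk_y)}a(k)$; $R_\theta$ = counterclockwise rotation by $\theta$; $\phi=\arctan(n_2/l_2)$ (so $R_\phi q_1=p_1$). $\Gamma=D_4\dot+T^2$ is generated by $\gamma_1(x,y)=(-x,y)$,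 $\gamma_2(x,y)=(y,x)$ and translations with $(s,t)\in(\mathbb R/2\pi\mathbb Z)^2$. *)

From Stdlib Require Import Reals List.
Import ListNotations.
From Coquelicot Require Import Coquelicot.
Open Scope R_scope.

Record coord6 := mk6 { cz1 : C; cz2 : C; cw1 : C; cw2 : C; cw3 : C; cw4 : C }.

Definition pt := (R * R)%type.
Definition pneg (p : pt) : pt := (- fst p, - snd p).

Definition pt_eqb (k p : pt) : bool :=
  if Req_EM_T (fst k) (fst p) then
    if Req_EM_T (snd k) (snd p) then true else false
  else false.

Section Waves.
Variables l1 l2 n2 : nat.
Definition q1 : pt := (INR l1, 0).
Definition q2 : pt := (0, INR l1).
Definition p1 : pt := (INR l2, INR n2).
Definition p2 : pt := (INR l2, - INR n2).
Definition p3 : pt := (INR n2, INR l2).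
Definition p4 : pt := (INR n2, - INR l2).

(* The function on R^2 (wave-vector space) with support in A~ and
   a(-k) = conj (a k) whose coordinates are v. *)
Definition embed (v : coord6) : pt -> C := fun k =>
  if pt_eqb k q1 then cz1 v else if pt_eqb k (pneg q1) then Cconj (cz1 v) else
  if pt_eqb k q2 then cz2 v else if pt_eqb k (pneg q2) then Cconj (cz2 v) else
  if pt_eqb k p1 then cw1 v else if pt_eqb k (pneg p1) then Cconj (cw1 v) else
  if pt_eqb k p2 then cw2 v else if pt_eqb k (pneg p2) then Cconj (cw2 v) else
  if pt_eqb k p3 then cw3 v else if pt_eqb k (pneg p3) then Cconj (cw3 v) else
  if pt_eqb k p4 then cw4 v else if pt_eqb k (pneg p4) then Cconj (cw4 v) else
  0%C.
End Waves.

(* 2x2 real matrices (a,b,c,d) = [[a,b],[c,d]] *)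
Definition mat := (R * R * R * R)%type.
Definition mapply (m : mat) (k : pt) : pt :=
  let '(a, b, c, d) := m in (a * fst k + b * snd k, c * fst k + d * snd k).
Definition mtrans (m : mat) : mat := let '(a, b, c, d) := m in (a, c, b, d).

(* Action of an orthogonal matrix gamma on functions: (gamma a)(k) = a(gamma^{-1} k),
   with gamma^{-1} = gamma^T (only used for orthogonal matrices). *)
Definition orth_act (m : mat) (a : pt -> C) : pt -> C :=
  fun k => a (mapply (mtrans m) k).

Definition Cexpi (th : R) : C := (cos th, sin th).
Definition trans_act (s t : R) (a : pt -> C) : pt -> C :=
  fun k => (Cexpi (- (s * fst k + t * snd k)) * a k)%C.

Definition rotm (th : R) : mat := (cos th, - sin th, sin th, cos th).

(* D4 = group generated by gamma1 (x,y) -> (-x,y) and gamma2 (x,y) -> (y,x):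
   all eight signed permutation matrices. *)
Definition D4 : list mat :=
  [ (1,0,0,1); (-1,0,0,1); (1,0,0,-1); (-1,0,0,-1);
    (0,1,1,0); (0,-1,1,0); (0,1,-1,0); (0,-1,-1,0) ]%R.

Definition Gamma_equivariant (l1 l2 n2 : nat) (F : coord6 -> coord6) : Prop :=
  (forall m, In m D4 -> forall v v' : coord6,
     embed l1 l2 n2 v' = orth_act m (embed l1 l2 n2 v) ->
     embed l1 l2 n2 (F v') = orth_act m (embed l1 l2 n2 (F v))) /\
  (forall s t : R, forall v v' : coord6,
     embed l1 l2 n2 v' = trans_act s t (embed l1 l2 n2 v) ->
     embed l1 l2 n2 (F v') = trans_act s t (embed l1 l2 n2 (F v))).

Definition phi_angle (l2 n2 : nat) : R := atan (INR n2 / INR l2).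

From Stdlib Require Import Reals List Lra Lia ZArith Znumtheory FunctionalExtensionality Classical.
From Coquelicot Require Import Coquelicot.
Import ListNotations.
Open Scope R_scope.

(* On E^c ∩ R_{-phi} E^c the rotation R_phi sends q1, q2, p2, p3 to p1, -p4, q1, q2 and
   p1, p4 off the lattice of modes, so in coordinates it is the map
   (z1, z2, 0, w2, w3, 0) |-> (w2, w3, z1, 0, 0, conj z2).  Every coordinate of F(Phi) is f or
   h evaluated at a D4-image of Phi, so the six coordinate identities expressing
   R_phi F(Phi) = F(R_phi Phi) all reduce to the single relation f = h o R_phi.  That F(Phi)
   again has w1 = w4 = 0 is automatic: writing the triple as g (L, l, n) with L, l, n
   coprime, the translation by 2 pi (n, l) / l1 fixes q1, q2, p2, p3 but multiplies the
   p1-mode by exp (-4 pi i l n / L) <> 1, so translation equivariance kills w1, and a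
   quarter turn moves w4 to w1. *)

Section PythagoreanTriples.
Local Open Scope Z_scope.

Lemma gcd_hyp_leg_1 (L x y : Z) :
  Z.gcd (Z.gcd L x) y = 1 -> L * L = x * x + y * y -> Z.gcd L x = 1.
Proof.
  intros Hgcd Hsq.
  assert (Hdiv : (Z.gcd L x | y * y)).
  { replace (y * y) with (L * L - x * x) by lia.
    apply Z.divide_sub_r; apply Z.divide_mul_l;
      [apply Z.gcd_divide_l | apply Z.gcd_divide_r]. }
  assert (Hcop : rel_prime (Z.gcd L x) (y * y))
    by (apply rel_prime_mult; apply Zgcd_1_rel_prime; exact Hgcd).
  apply Zgcd_1_rel_prime in Hcop.
  apply Z.divide_gcd_iff in Hdiv; [congruence | apply Z.gcd_nonneg].
Qed.

Lemma primitive_pythagorean_triple (A B D : Z) :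
  0 < B -> 0 < D -> A * A = B * B + D * D ->
  exists g L l n, 0 < g /\ A = g * L /\ B = g * l /\ D = g * n /\
    L * L = l * l + n * n /\ Z.gcd L l = 1 /\ Z.gcd L n = 1.
Proof.
  intros HB HD Hpyth.
  set (g := Z.gcd (Z.gcd A B) D).
  assert (HgA : (g | A)) by (apply (Z.divide_trans _ (Z.gcd A B)); apply Z.gcd_divide_l).
  assert (HgB : (g | B)) by
    (apply (Z.divide_trans _ (Z.gcd A B)); [apply Z.gcd_divide_l | apply Z.gcd_divide_r]).
  assert (HgD : (g | D)) by apply Z.gcd_divide_r.
  destruct HgA as [L HL], HgB as [l Hl], HgD as [n Hn].
  assert (Hg0 : 0 <= g) by apply Z.gcd_nonneg.
  assert (Hg : 0 < g) by (destruct (Z.eq_dec g 0) as [E|]; [rewrite E in Hn; lia | lia]).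
  assert (HLln : L * L = l * l + n * n).
  { apply (Z.mul_cancel_l _ _ (g * g)); nia. }
  assert (Hprim : Z.gcd (Z.gcd L l) n = 1).
  { assert (Hscale : g * Z.gcd (Z.gcd L l) n = g).
    { unfold g at 2. rewrite HL, Hl, Hn, <- !(Z.mul_comm g).
      rewrite !Z.gcd_mul_mono_l_nonneg by lia. reflexivity. }
    nia. }
  exists g, L, l, n. repeat split; try lia.
  - apply (gcd_hyp_leg_1 _ _ n); assumption.
  - apply (gcd_hyp_leg_1 _ _ l); [|lia].
    rewrite <- Z.gcd_assoc, (Z.gcd_comm n l), Z.gcd_assoc. exact Hprim.
Qed.

(* Dividing by the gcd [g], the triple is [g (L, l, n)] with [L] coprime to [l] and [n];
   then [(a, b) = (n, l)] works, since [a B + b D = g (2 l n)] is not a multiple of [g L]. *)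
Lemma pythagorean_separating_vector (A B D : Z) :
  0 < B -> 0 < D -> A * A = B * B + D * D ->
  exists a b c, a * B = b * D /\ a * D + b * B = c * A /\ ~ (A | a * B + b * D).
Proof.
  intros HB HD Hpyth.
  destruct (primitive_pythagorean_triple A B D HB HD Hpyth)
    as (g & L & l & n & Hg & -> & -> & -> & HLln & HLl & HLn).
  exists n, l, L. repeat split; try nia.
  replace (n * (g * l) + l * (g * n)) with (g * (n * (l * 2))) by ring.
  rewrite Z.mul_divide_cancel_l by lia. intro Hdiv.
  apply Z.gauss, Z.gauss in Hdiv; [| assumption | assumption].
  apply Z.divide_abs_l, Z.divide_pos_le in Hdiv; [|lia].
  assert (HLbound : -2 <= L <= 2) by (destruct (Z.abs_spec L) as [[_ E] | [_ E]]; lia).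
  assert (0 < l) by nia; assert (0 < n) by nia.
  assert (l = 1) by nia; assert (n = 1) by nia; subst l n.
  assert (L = -2 \/ L = -1 \/ L = 0 \/ L = 1 \/ L = 2) as HL by lia.
  destruct HL as [-> | [-> | [-> | [-> | ->]]]]; lia.
Qed.

Lemma pythagorean_hyp_neq_twice_leg (A B D : Z) :
  0 < B -> 0 < D -> A * A = B * B + D * D -> A <> 2 * D.
Proof.
  intros HB HD Hpyth ->.
  destruct (pythagorean_separating_vector _ _ _ HB HD Hpyth) as (a & b & c & Hab & _ & Hndiv).
  apply Hndiv. exists b. lia.
Qed.
End PythagoreanTriples.

Lemma pythagorean_separating_vector_R (l1 l2 n2 : nat) :
  (0 < l2)%nat -> (0 < n2)%nat -> (l1 * l1 = l2 * l2 + n2 * n2)%nat ->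
  exists a b c : Z,
    IZR a * INR l2 = IZR b * INR n2 /\
    IZR a * INR n2 + IZR b * INR l2 = IZR c * INR l1 /\
    forall z : Z, IZR a * INR l2 + IZR b * INR n2 <> IZR z * INR l1.
Proof.
  intros Hl2 Hn2 Hpyth.
  destruct (pythagorean_separating_vector (Z.of_nat l1) (Z.of_nat l2) (Z.of_nat n2))
    as (a & b & c & Hab & Hc & Hndiv);
    [lia | lia | rewrite <- !Nat2Z.inj_mul, <- Nat2Z.inj_add; now rewrite Hpyth |].
  exists a, b, c. rewrite !INR_IZR_INZ, <- !mult_IZR, <- !plus_IZR.
  split; [| split].
  - now rewrite Hab.
  - now rewrite Hc.
  - intros z Hz. apply Hndiv. exists z. rewrite <- mult_IZR in Hz. now apply eq_IZR.
Qed.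

Lemma pythagorean_hyp_neq_twice_leg_R (l1 l2 n2 : nat) :
  (0 < l2)%nat -> (0 < n2)%nat -> (l1 * l1 = l2 * l2 + n2 * n2)%nat -> INR l1 <> 2 * INR n2.
Proof.
  intros Hl2 Hn2 Hpyth Heq.
  apply (pythagorean_hyp_neq_twice_leg (Z.of_nat l1) (Z.of_nat l2) (Z.of_nat n2));
    [lia | lia | rewrite <- !Nat2Z.inj_mul, <- Nat2Z.inj_add; now rewrite Hpyth |].
  apply eq_IZR. rewrite mult_IZR, <- !INR_IZR_INZ. exact Heq.
Qed.

Lemma Cexpi_opp (th : R) : Cexpi (- th) = Cconj (Cexpi th).
Proof. unfold Cexpi, Cconj; cbn. now rewrite cos_neg, sin_neg. Qed.

Lemma Cexpi_2PI_mult (z : Z) : Cexpi (2 * PI * IZR z) = 1%C.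
Proof.
  assert (Hnat : forall n : nat, Cexpi (2 * PI * INR n) = 1%C).
  { intro n. unfold Cexpi.
    replace (2 * PI * INR n) with (0 + 2 * INR n * PI) by ring.
    now rewrite cos_period, sin_period, cos_0, sin_0. }
  destruct (Z.le_gt_cases 0 z).
  - rewrite <- (Z2Nat.id z), <- INR_IZR_INZ by lia. apply Hnat.
  - replace z with (- Z.of_nat (Z.to_nat (- z)))%Z by lia.
    rewrite opp_IZR, <- INR_IZR_INZ, Ropp_mult_distr_r_reverse, Cexpi_opp, Hnat.
    apply injective_projections; cbn; ring.
Qed.

Lemma Cexpi_eq_1 (th : R) : Cexpi th = 1%C -> exists z : Z, th = 2 * PI * IZR z.
Proof.
  intro H. apply (f_equal fst) in H. cbn in H.
  replace th with (2 * (th / 2)) in H by field. rewrite cos_2a_sin in H.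
  destruct (sin_eq_0_0 (th / 2)) as [z Hz]; [nra |].
  exists z. lra.
Qed.

Lemma Cmult_fixed_point (e w : C) : (e * w)%C = w -> e <> 1%C -> w = 0%C.
Proof.
  intros H He.
  assert (Hne : (e - 1)%C <> 0%C).
  { intro E. apply He. replace e with ((e - 1) + 1)%C by ring. rewrite E. ring. }
  replace w with (/ (e - 1) * (e * w - w))%C by (field; exact Hne).
  rewrite H. ring.
Qed.

Lemma pt_eqb_false (k p : pt) : k <> p -> pt_eqb k p = false.
Proof.
  destruct k, p; unfold pt_eqb; cbn. intro Hne.
  do 2 (destruct Req_EM_T; [|reflexivity]). subst. congruence.
Qed.

Lemma pneg_involutive (k : pt) : pneg (pneg k) = k.
Proof. destruct k; unfold pneg; cbn; f_equal; ring. Qed.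

Lemma mapply_pneg (m : mat) (k : pt) : mapply m (pneg k) = pneg (mapply m k).
Proof. destruct m as [[[a b] c] d], k; unfold mapply, pneg; cbn; f_equal; ring. Qed.

Lemma Cconj_0 : Cconj 0 = 0.
Proof. apply injective_projections; cbn; ring. Qed.

Definition orthogonal (m : mat) : Prop :=
  forall k, mapply m (mapply (mtrans m) k) = k /\ mapply (mtrans m) (mapply m k) = k.

Lemma rotm_orthogonal th : orthogonal (rotm th).
Proof.
  intros [x y]. pose proof (sin2_cos2 th) as Hsc. unfold Rsqr in Hsc.
  unfold mapply, mtrans, rotm; cbn.
  split; f_equal;
    [ transitivity ((sin th * sin th + cos th * cos th) * x)
    | transitivity ((sin th * sin th + cos th * cos th) * y)
    | transitivity ((sin th * sin th + cos th * cos th) * x)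
    | transitivity ((sin th * sin th + cos th * cos th) * y) ];
    solve [ring | rewrite Hsc; ring].
Qed.

Lemma D4_orthogonal m : In m D4 -> orthogonal m.
Proof.
  cbn; intros Hm [x y];
    repeat destruct Hm as [<- | Hm]; try contradiction;
    unfold mapply, mtrans; cbn; split; f_equal; ring.
Qed.

Definition flip_y (u : coord6) : coord6 :=
  mk6 (cz1 u) (Cconj (cz2 u)) (cw2 u) (cw1 u) (cw4 u) (cw3 u).
Definition swap_xy (u : coord6) : coord6 :=
  mk6 (cz2 u) (cz1 u) (cw3 u) (Cconj (cw4 u)) (cw1 u) (Cconj (cw2 u)).
Definition quarter_turn (u : coord6) : coord6 :=
  mk6 (Cconj (cz2 u)) (cz1 u) (cw4 u) (Cconj (cw3 u)) (cw2 u) (Cconj (cw1 u)).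
Definition conj_coords (u : coord6) : coord6 :=
  mk6 (Cconj (cz1 u)) (Cconj (cz2 u)) (Cconj (cw1 u)) (Cconj (cw2 u)) (Cconj (cw3 u))
    (Cconj (cw4 u)).

Lemma coord6_eq u u' :
  cz1 u = cz1 u' -> cz2 u = cz2 u' -> cw1 u = cw1 u' -> cw2 u = cw2 u' ->
  cw3 u = cw3 u' -> cw4 u = cw4 u' -> u = u'.
Proof. destruct u, u'; cbn; intros; subst; reflexivity. Qed.

Lemma f_h_symmetry_iff (F : coord6 -> coord6) :
  (forall z1 z2 w2 w3 : C,
     cz1 (F (mk6 z1 z2 0 w2 w3 0)) = cw1 (F (mk6 w2 w3 z1 0 0 (Cconj z2)))) <->
  (forall z1 z2 w1 w4 : C,
     cw1 (F (mk6 z1 z2 w1 0 0 w4)) = cz1 (F (mk6 w1 (Cconj w4) 0 z1 z2 0))).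
Proof.
  split; intros Hsym a b c d; rewrite Hsym, Cconj_conj; reflexivity.
Qed.

Section Modes.
Variables l1 l2 n2 : nat.
Hypothesis Hn2 : 0 < INR n2.
Hypothesis Hn2l2 : INR n2 < INR l2.
Hypothesis Hl2l1 : INR l2 < INR l1.
Hypothesis Hpyth : INR l1 * INR l1 = INR l2 * INR l2 + INR n2 * INR n2.
Hypothesis Hhyp_leg : INR l1 <> 2 * INR n2.

Local Notation E := (embed l1 l2 n2).

Definition waves : list pt := [q1 l1; q2 l1; p1 l2 n2; p2 l2 n2; p3 l2 n2; p4 l2 n2].

Definition in_support (k : pt) : Prop := exists p, In p waves /\ (k = p \/ k = pneg p).

Lemma in_waves_cases (P : pt -> Prop) :
  P (q1 l1) -> P (q2 l1) -> P (p1 l2 n2) -> P (p2 l2 n2) -> P (p3 l2 n2) -> P (p4 l2 n2) ->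
  forall p, In p waves -> P p.
Proof. cbn; intros; intuition (subst; assumption). Qed.

Lemma in_support_pneg (k : pt) : in_support k -> in_support (pneg k).
Proof.
  intros (p & Hp & [-> | ->]); exists p; split; auto.
  rewrite pneg_involutive; auto.
Qed.

Ltac in_support_wave :=
  lazymatch goal with
  | |- in_support (pneg ?p) => exists p; split; [cbn; tauto | right; reflexivity]
  | |- in_support ?p => exists p; split; [cbn; tauto | left; reflexivity]
  end.

Ltac eval_embed :=
  unfold embed, pt_eqb, q1, q2, p1, p2, p3, p4, pneg; cbn [fst snd];
  repeat (destruct Req_EM_T; try (exfalso; lra));
  cbn [cz1 cz2 cw1 cw2 cw3 cw4]; rewrite ?Cconj_conj; reflexivity.

Lemma embed_q1 u : E u (q1 l1) = cz1 u. Proof. eval_embed. Qed.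
Lemma embed_q2 u : E u (q2 l1) = cz2 u. Proof. eval_embed. Qed.
Lemma embed_p1 u : E u (p1 l2 n2) = cw1 u. Proof. eval_embed. Qed.
Lemma embed_p2 u : E u (p2 l2 n2) = cw2 u. Proof. eval_embed. Qed.
Lemma embed_p3 u : E u (p3 l2 n2) = cw3 u. Proof. eval_embed. Qed.
Lemma embed_p4 u : E u (p4 l2 n2) = cw4 u. Proof. eval_embed. Qed.
Lemma embed_nq1 u : E u (pneg (q1 l1)) = Cconj (cz1 u). Proof. eval_embed. Qed.
Lemma embed_nq2 u : E u (pneg (q2 l1)) = Cconj (cz2 u). Proof. eval_embed. Qed.
Lemma embed_np1 u : E u (pneg (p1 l2 n2)) = Cconj (cw1 u). Proof. eval_embed. Qed.
Lemma embed_np2 u : E u (pneg (p2 l2 n2)) = Cconj (cw2 u). Proof. eval_embed. Qed.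
Lemma embed_np3 u : E u (pneg (p3 l2 n2)) = Cconj (cw3 u). Proof. eval_embed. Qed.
Lemma embed_np4 u : E u (pneg (p4 l2 n2)) = Cconj (cw4 u). Proof. eval_embed. Qed.

Lemma embed_outside u k : ~ in_support k -> E u k = 0.
Proof.
  intro Hk. unfold embed.
  rewrite !pt_eqb_false; [reflexivity | ..];
    intros ->; apply Hk; in_support_wave.
Qed.

Lemma embed_pneg u k : E u (pneg k) = Cconj (E u k).
Proof.
  assert (Hwave : forall p, In p waves -> E u (pneg p) = Cconj (E u p)).
  { apply in_waves_cases;
      rewrite ?embed_nq1, ?embed_nq2, ?embed_np1, ?embed_np2, ?embed_np3, ?embed_np4,
        ?embed_q1, ?embed_q2, ?embed_p1, ?embed_p2, ?embed_p3, ?embed_p4; reflexivity. }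
  destruct (classic (in_support k)) as [(p & Hp & [-> | ->]) | Hk].
  - auto.
  - now rewrite pneg_involutive, Hwave, Cconj_conj.
  - rewrite !embed_outside, ?Cconj_0; auto.
    intro Hneg. apply Hk. rewrite <- pneg_involutive. now apply in_support_pneg.
Qed.

Lemma embed_inj u u' : E u = E u' -> u = u'.
Proof.
  intro H.
  assert (Hat : forall k, E u k = E u' k) by (intro; now rewrite H).
  pose proof (Hat (q1 l1)) as H1; pose proof (Hat (q2 l1)) as H2;
  pose proof (Hat (p1 l2 n2)) as H3; pose proof (Hat (p2 l2 n2)) as H4;
  pose proof (Hat (p3 l2 n2)) as H5; pose proof (Hat (p4 l2 n2)) as H6.
  rewrite !embed_q1 in H1; rewrite !embed_q2 in H2; rewrite !embed_p1 in H3;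
  rewrite !embed_p2 in H4; rewrite !embed_p3 in H5; rewrite !embed_p4 in H6.
  destruct u, u'; cbn in *; congruence.
Qed.

Lemma in_support_off_axes x y :
  in_support (x, y) -> x <> 0 -> y <> 0 ->
  (Rabs x = INR l2 \/ Rabs x = INR n2) /\ (Rabs y = INR l2 \/ Rabs y = INR n2).
Proof.
  intros (p & Hp & Hk). revert Hk. pattern p. revert p Hp.
  apply in_waves_cases; unfold q1, q2, p1, p2, p3, p4, pneg; cbn;
    intros [Hk | Hk] Hx Hy; injection Hk as -> ->;
    rewrite ?Rabs_Ropp, ?Rabs_pos_eq by lra;
    first [tauto | exfalso; apply Hx; ring | exfalso; apply Hy; ring].
Qed.

Lemma embed_orth_act_iff m u u' :
  orthogonal m ->
  E u' = orth_act m (E u) <->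
  (forall p, In p waves -> E u' p = E u (mapply (mtrans m) p)) /\
  (forall p, In p waves -> ~ in_support (mapply m p) -> E u p = 0).
Proof.
  intro Hm. split.
  - intro H. split.
    + intros p _. now rewrite H.
    + intros p _ Hout.
      transitivity (orth_act m (E u) (mapply m p)).
      * unfold orth_act. now rewrite (proj2 (Hm p)).
      * rewrite <- H. now apply embed_outside.
  - intros [Hwave Hout]. apply functional_extensionality; intro k. unfold orth_act.
    destruct (classic (in_support k)) as [(p & Hp & [-> | ->]) | Hk].
    + auto.
    + now rewrite mapply_pneg, !embed_pneg, Hwave.
    + rewrite embed_outside by exact Hk.
      destruct (classic (in_support (mapply (mtrans m) k))) as [(p & Hp & [Hj | Hj]) | Hj].
      * rewrite Hj. symmetry. apply Hout; [exact Hp |].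
        rewrite <- Hj, (proj1 (Hm k)). exact Hk.
      * rewrite Hj, embed_pneg, (Hout p Hp); [now rewrite Cconj_0 |].
        intro Hin. apply Hk. apply in_support_pneg in Hin.
        now rewrite <- mapply_pneg, <- Hj, (proj1 (Hm k)) in Hin.
      * symmetry. now apply embed_outside.
Qed.

Lemma trans_act_embed_fixed s t u :
  (forall p, In p waves ->
     (exists z : Z, s * fst p + t * snd p = 2 * PI * IZR z) \/ E u p = 0) ->
  trans_act s t (E u) = E u.
Proof.
  intro Hwave. apply functional_extensionality; intro k. unfold trans_act.
  destruct (classic (in_support k)) as [(p & Hp & [-> | ->]) | Hk].
  - destruct (Hwave p Hp) as [[z Hz] | H0].
    + replace (- _) with (2 * PI * IZR (- z)) by (rewrite opp_IZR; lra).
      rewrite Cexpi_2PI_mult. ring.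
    + rewrite H0. ring.
  - destruct (Hwave p Hp) as [[z Hz] | H0].
    + replace (- _) with (2 * PI * IZR z) by (unfold pneg; cbn; lra).
      rewrite Cexpi_2PI_mult. ring.
    + rewrite embed_pneg, H0, Cconj_0. ring.
  - rewrite embed_outside by assumption. ring.
Qed.

Ltac show_in_support :=
  let same_pt := unfold mapply, q1, q2, p1, p2, p3, p4, pneg; cbn; f_equal; ring in
  let try_wave p :=
    solve [ exists p; split; [cbn; tauto | left; same_pt]
          | exists p; split; [cbn; tauto | right; same_pt] ] in
  first [ try_wave (q1 l1) | try_wave (q2 l1) | try_wave (p1 l2 n2)
        | try_wave (p2 l2 n2) | try_wave (p3 l2 n2) | try_wave (p4 l2 n2) ].

Lemma D4_in_support m p : In m D4 -> In p waves -> in_support (mapply m p).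
Proof.
  cbn; intros Hm Hp;
    repeat destruct Hm as [<- | Hm]; try contradiction;
    repeat destruct Hp as [<- | Hp]; try contradiction; show_in_support.
Qed.

Lemma embed_D4_act m u u' :
  In m D4 -> (forall p, In p waves -> E u' p = E u (mapply (mtrans m) p)) ->
  E u' = orth_act m (E u).
Proof.
  intros Hm Hwave. apply embed_orth_act_iff; [now apply D4_orthogonal |].
  split; [exact Hwave |].
  intros p Hp Hout. contradiction Hout. now apply D4_in_support.
Qed.

Local Notation Rphi := (rotm (phi_angle l2 n2)).

Lemma cos_phi_angle : cos (phi_angle l2 n2) = INR l2 / INR l1.
Proof.
  unfold phi_angle. rewrite cos_atan.
  replace (1 + (INR n2 / INR l2)²) with ((INR l1 / INR l2)²)
    by (unfold Rsqr; field_simplify_eq; lra).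
  rewrite sqrt_Rsqr by (apply Rlt_le, Rdiv_lt_0_compat; lra).
  field; split; lra.
Qed.

Lemma sin_phi_angle : sin (phi_angle l2 n2) = INR n2 / INR l1.
Proof.
  unfold phi_angle. rewrite sin_atan.
  replace (1 + (INR n2 / INR l2)²) with ((INR l1 / INR l2)²)
    by (unfold Rsqr; field_simplify_eq; lra).
  rewrite sqrt_Rsqr by (apply Rlt_le, Rdiv_lt_0_compat; lra).
  field; split; lra.
Qed.

(* [R_phi p1 = (rot_x, rot_y) = l1 (cos 2phi, sin 2phi)]; neither coordinate is a leg. *)
Definition rot_x := (INR l2 * INR l2 - INR n2 * INR n2) / INR l1.
Definition rot_y := 2 * INR l2 * INR n2 / INR l1.

Lemma not_in_support_rot x y :
  x <> 0 -> y <> 0 -> Rabs x = rot_y \/ Rabs y = rot_y -> ~ in_support (x, y).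
Proof.
  intros Hx Hy Hrot Hin.
  destruct (in_support_off_axes x y Hin Hx Hy) as [Hlx Hly].
  assert (Hl1 : 0 < INR l1) by lra.
  assert (Hrot_l2 : rot_y <> INR l2).
  { unfold rot_y. intro E. apply Hhyp_leg.
    apply (Rmult_eq_reg_l (INR l2)); [| lra].
    apply (Rmult_eq_reg_r (/ INR l1)); [| apply Rinv_neq_0_compat; lra].
    rewrite <- E at 1. field. lra. }
  assert (Hrot_n2 : rot_y <> INR n2).
  { unfold rot_y. intro E.
    assert (2 * INR l2 = INR l1) by
      (apply (Rmult_eq_reg_l (INR n2)); [| lra];
       apply (Rmult_eq_reg_r (/ INR l1)); [| apply Rinv_neq_0_compat; lra];
       rewrite <- E at 2; field; lra).
    nra. }
  destruct Hrot as [E | E]; rewrite E in *; tauto.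
Qed.

Ltac rotate_wave :=
  unfold rot_x, rot_y, mapply, mtrans, rotm, q1, q2, p1, p2, p3, p4, pneg;
  rewrite cos_phi_angle, sin_phi_angle; cbn [fst snd]; f_equal; field_simplify_eq; lra.

Lemma rotT_q1 : mapply (mtrans Rphi) (q1 l1) = p2 l2 n2. Proof. rotate_wave. Qed.
Lemma rotT_q2 : mapply (mtrans Rphi) (q2 l1) = p3 l2 n2. Proof. rotate_wave. Qed.
Lemma rotT_p1 : mapply (mtrans Rphi) (p1 l2 n2) = q1 l1. Proof. rotate_wave. Qed.
Lemma rotT_p2 : mapply (mtrans Rphi) (p2 l2 n2) = (rot_x, - rot_y). Proof. rotate_wave. Qed.
Lemma rotT_p3 : mapply (mtrans Rphi) (p3 l2 n2) = (rot_y, rot_x). Proof. rotate_wave. Qed.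
Lemma rotT_p4 : mapply (mtrans Rphi) (p4 l2 n2) = pneg (q2 l1). Proof. rotate_wave. Qed.
Lemma rot_q1 : mapply Rphi (q1 l1) = p1 l2 n2. Proof. rotate_wave. Qed.
Lemma rot_q2 : mapply Rphi (q2 l1) = pneg (p4 l2 n2). Proof. rotate_wave. Qed.
Lemma rot_p1 : mapply Rphi (p1 l2 n2) = (rot_x, rot_y). Proof. rotate_wave. Qed.
Lemma rot_p2 : mapply Rphi (p2 l2 n2) = q1 l1. Proof. rotate_wave. Qed.
Lemma rot_p3 : mapply Rphi (p3 l2 n2) = q2 l1. Proof. rotate_wave. Qed.
Lemma rot_p4 : mapply Rphi (p4 l2 n2) = (rot_y, - rot_x). Proof. rotate_wave. Qed.

Definition rotate_coords (u : coord6) : coord6 :=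
  mk6 (cw2 u) (cw3 u) (cz1 u) 0 0 (Cconj (cz2 u)).

Lemma embed_rotate_iff u u' :
  E u' = orth_act Rphi (E u) <-> cw1 u = 0 /\ cw4 u = 0 /\ u' = rotate_coords u.
Proof.
  assert (Hx : rot_x <> 0) by (unfold rot_x; apply Rgt_not_eq, Rdiv_lt_0_compat; nra).
  assert (Hy : rot_y <> 0) by (unfold rot_y; apply Rgt_not_eq, Rdiv_lt_0_compat; nra).
  assert (Hneg : forall r, r <> 0 -> - r <> 0) by (intros r Hr; lra).
  assert (Habs_y : Rabs rot_y = rot_y)
    by (apply Rabs_pos_eq; unfold rot_y; apply Rlt_le, Rdiv_lt_0_compat; nra).
  assert (Habs_ny : Rabs (- rot_y) = rot_y) by now rewrite Rabs_Ropp.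
  rewrite (embed_orth_act_iff _ _ _ (rotm_orthogonal _)). split.
  - intros [Hwave Hout].
    pose proof (Hwave (q1 l1) ltac:(cbn; tauto)) as Ez1.
    pose proof (Hwave (q2 l1) ltac:(cbn; tauto)) as Ez2.
    pose proof (Hwave (p1 l2 n2) ltac:(cbn; tauto)) as Ew1.
    pose proof (Hwave (p2 l2 n2) ltac:(cbn; tauto)) as Ew2.
    pose proof (Hwave (p3 l2 n2) ltac:(cbn; tauto)) as Ew3.
    pose proof (Hwave (p4 l2 n2) ltac:(cbn; tauto)) as Ew4.
    pose proof (Hout (p1 l2 n2) ltac:(cbn; tauto)) as H1.
    pose proof (Hout (p4 l2 n2) ltac:(cbn; tauto)) as H4.
    rewrite rotT_q1, embed_q1, embed_p2 in Ez1. rewrite rotT_q2, embed_q2, embed_p3 in Ez2.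
    rewrite rotT_p1, embed_p1, embed_q1 in Ew1. rewrite rotT_p4, embed_p4, embed_nq2 in Ew4.
    rewrite rotT_p2, embed_p2, embed_outside in Ew2 by (apply not_in_support_rot; auto).
    rewrite rotT_p3, embed_p3, embed_outside in Ew3 by (apply not_in_support_rot; auto).
    rewrite rot_p1, embed_p1 in H1. rewrite rot_p4, embed_p4 in H4.
    split; [apply H1 | split; [apply H4 |]]; [apply not_in_support_rot; auto .. |].
    destruct u'; cbn in *; subst; reflexivity.
  - intros (H1 & H4 & ->). split.
    + apply in_waves_cases;
        rewrite ?rotT_q1, ?rotT_q2, ?rotT_p1, ?rotT_p2, ?rotT_p3, ?rotT_p4,
          ?embed_q1, ?embed_q2, ?embed_p1, ?embed_p2, ?embed_p3, ?embed_p4, ?embed_nq2;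
        cbn; rewrite ?Cconj_conj, ?embed_outside; auto; apply not_in_support_rot; auto.
    + intros p Hp; pattern p; revert p Hp.
      apply in_waves_cases; intro Hout;
        rewrite ?rot_q1, ?rot_q2, ?rot_p1, ?rot_p2, ?rot_p3, ?rot_p4 in Hout;
        rewrite ?embed_p1, ?embed_p4; auto;
        contradiction Hout; in_support_wave.
Qed.

Ltac eval_D4_wave := unfold flip_y, swap_xy, quarter_turn, conj_coords, mapply, mtrans; eval_embed.

Lemma embed_flip_y u : E (flip_y u) = orth_act (1, 0, 0, -1) (E u).
Proof. apply embed_D4_act; [cbn; tauto |]. apply in_waves_cases; eval_D4_wave. Qed.
Lemma embed_swap_xy u : E (swap_xy u) = orth_act (0, 1, 1, 0) (E u).
Proof. apply embed_D4_act; [cbn; tauto |]. apply in_waves_cases; eval_D4_wave. Qed.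
Lemma embed_quarter_turn u : E (quarter_turn u) = orth_act (0, -1, 1, 0) (E u).
Proof. apply embed_D4_act; [cbn; tauto |]. apply in_waves_cases; eval_D4_wave. Qed.
Lemma embed_conj_coords u : E (conj_coords u) = orth_act (-1, 0, 0, -1) (E u).
Proof. apply embed_D4_act; [cbn; tauto |]. apply in_waves_cases; eval_D4_wave. Qed.

Section Equivariance.
Variable F : coord6 -> coord6.
Hypothesis HF : Gamma_equivariant l1 l2 n2 F.

Lemma F_D4_commute m act :
  (forall u, E (act u) = orth_act m (E u)) -> In m D4 -> forall u, F (act u) = act (F u).
Proof.
  intros Hact Hm u. apply embed_inj. rewrite Hact.
  exact (proj1 HF m Hm u (act u) (Hact u)).
Qed.

Lemma F_cz1_flip_y u : cz1 (F u) = cz1 (F (flip_y u)).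
Proof. now rewrite (F_D4_commute _ _ embed_flip_y ltac:(cbn; tauto)). Qed.
Lemma F_cw2 u : cw2 (F u) = cw1 (F (flip_y u)).
Proof. now rewrite (F_D4_commute _ _ embed_flip_y ltac:(cbn; tauto)). Qed.
Lemma F_cz2 u : cz2 (F u) = cz1 (F (swap_xy u)).
Proof. now rewrite (F_D4_commute _ _ embed_swap_xy ltac:(cbn; tauto)). Qed.
Lemma F_cw3 u : cw3 (F u) = cw1 (F (swap_xy u)).
Proof. now rewrite (F_D4_commute _ _ embed_swap_xy ltac:(cbn; tauto)). Qed.
Lemma F_cw4 u : cw4 (F u) = cw1 (F (quarter_turn u)).
Proof. now rewrite (F_D4_commute _ _ embed_quarter_turn ltac:(cbn; tauto)). Qed.
Lemma F_Cconj_cz1 u : Cconj (cz1 (F u)) = cz1 (F (conj_coords u)).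
Proof. now rewrite (F_D4_commute _ _ embed_conj_coords ltac:(cbn; tauto)). Qed.

Variables a b c : Z.
Hypothesis Hab : IZR a * INR l2 = IZR b * INR n2.
Hypothesis Hc : IZR a * INR n2 + IZR b * INR l2 = IZR c * INR l1.
Hypothesis Hsep : forall z : Z, IZR a * INR l2 + IZR b * INR n2 <> IZR z * INR l1.

Let s := 2 * PI * IZR a / INR l1.
Let t := 2 * PI * IZR b / INR l1.

Lemma separating_translation_fixes u :
  cw1 u = 0 -> cw4 u = 0 -> trans_act s t (E u) = E u.
Proof.
  intros H1 H4. apply trans_act_embed_fixed.
  apply in_waves_cases; unfold s, t.
  - left. exists a. unfold q1; cbn. field. lra.
  - left. exists b. unfold q2; cbn. field. lra.
  - right. now rewrite embed_p1.
  - left. exists 0%Z. unfold p2; cbn.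
    transitivity (2 * PI / INR l1 * (IZR a * INR l2 - IZR b * INR n2)); [field; lra |].
    rewrite Hab. ring.
  - left. exists c. unfold p3; cbn.
    transitivity (2 * PI / INR l1 * (IZR a * INR n2 + IZR b * INR l2)); [field; lra |].
    rewrite Hc. field. lra.
  - right. now rewrite embed_p4.
Qed.

Lemma separating_translation_moves_p1 :
  Cexpi (- (s * fst (p1 l2 n2) + t * snd (p1 l2 n2))) <> 1%C.
Proof.
  intro H. apply Cexpi_eq_1 in H as [z Hz]. apply (Hsep (- z)).
  unfold s, t, p1 in Hz; cbn in Hz. rewrite opp_IZR.
  pose proof PI_RGT_0.
  apply (Rmult_eq_reg_l (2 * PI / INR l1)); [| apply Rgt_not_eq, Rdiv_lt_0_compat; lra].
  transitivity (- (2 * PI * IZR z)); [rewrite <- Hz; field; lra | field; lra].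
Qed.

Lemma F_cw1_zero u : cw1 u = 0 -> cw4 u = 0 -> cw1 (F u) = 0.
Proof.
  intros H1 H4.
  pose proof (proj2 HF s t u u (eq_sym (separating_translation_fixes u H1 H4))) as H.
  apply (f_equal (fun a => a (p1 l2 n2))) in H. unfold trans_act in H.
  rewrite !embed_p1 in H.
  exact (Cmult_fixed_point _ _ (eq_sym H) separating_translation_moves_p1).
Qed.

Ltac simpl_coords :=
  unfold rotate_coords, flip_y, swap_xy, quarter_turn, conj_coords;
  cbn [cz1 cz2 cw1 cw2 cw3 cw4];
  rewrite ?Cconj_0, ?Cconj_conj.

Lemma F_rotate_coords
  (Hhf : forall z1 z2 w1 w4 : C,
     cw1 (F (mk6 z1 z2 w1 0 0 w4)) = cz1 (F (mk6 w1 (Cconj w4) 0 z1 z2 0)))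
  v : cw1 v = 0 -> cw4 v = 0 -> F (rotate_coords v) = rotate_coords (F v).
Proof.
  destruct v as [z1 z2 w1 w2 w3 w4]; cbn; intros -> ->.
  apply coord6_eq; simpl_coords.
  - rewrite F_cz1_flip_y, F_cw2. simpl_coords. now rewrite Hhf.
  - rewrite F_cz2, F_cw3. simpl_coords. now rewrite Hhf, Cconj_conj.
  - now rewrite Hhf, Cconj_conj.
  - rewrite F_cw2. apply F_cw1_zero; reflexivity.
  - rewrite F_cw3. apply F_cw1_zero; simpl_coords; reflexivity.
  - rewrite F_cw4, F_cz2, F_Cconj_cz1, F_cz1_flip_y. simpl_coords.
    now rewrite Hhf, Cconj_conj.
Qed.

Lemma F_rotation_equivariant_iff :
  (forall v v', E v' = orth_act Rphi (E v) -> orth_act Rphi (E (F v)) = E (F v')) <->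
  (forall z1 z2 w2 w3 : C,
     cz1 (F (mk6 z1 z2 0 w2 w3 0)) = cw1 (F (mk6 w2 w3 z1 0 0 (Cconj z2)))).
Proof.
  split.
  - intros Hcomm z1 z2 w2 w3.
    set (v := mk6 z1 z2 0 w2 w3 0).
    assert (Hv : E (rotate_coords v) = orth_act Rphi (E v)) by (apply embed_rotate_iff; auto).
    pose proof (Hcomm _ _ Hv) as Hcv.
    apply eq_sym, embed_rotate_iff in Hcv as (_ & _ & Hrot).
    change (mk6 w2 w3 z1 0 0 (Cconj z2)) with (rotate_coords v).
    now rewrite Hrot.
  - intros Hsym v v' Hvv'.
    apply embed_rotate_iff in Hvv' as (H1 & H4 & ->).
    symmetry. apply embed_rotate_iff. split; [| split].
    + now apply F_cw1_zero.
    + rewrite F_cw4. apply F_cw1_zero; cbn; rewrite ?H1, ?H4, ?Cconj_0; reflexivity.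
    + apply F_rotate_coords; [apply f_h_symmetry_iff, Hsym | exact H1 | exact H4].
Qed.

End Equivariance.
End Modes.

Theorem mainTheorem8 (l1 l2 n2 : nat)
  (Hl12 : (l2 < l1)%nat) (Hl2n2 : (n2 < l2)%nat) (Hn2 : (0 < n2)%nat)
  (Hpyth : (l1 * l1 = l2 * l2 + n2 * n2)%nat)
  (F : coord6 -> coord6) (HF : Gamma_equivariant l1 l2 n2 F) :
  let f := fun v => cz1 (F v) in
  let h := fun v => cw1 (F v) in
  let E := embed l1 l2 n2 in
  let Rphi := orth_act (rotm (phi_angle l2 n2)) in
  ((forall v v' : coord6, E v' = Rphi (E v) -> Rphi (E (F v)) = E (F v')) <->
   (forall z1 z2 w2 w3 : C,
      f (mk6 z1 z2 0 w2 w3 0) = h (mk6 w2 w3 z1 0 0 (Cconj z2)))) /\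
  ((forall z1 z2 w2 w3 : C,
      f (mk6 z1 z2 0 w2 w3 0) = h (mk6 w2 w3 z1 0 0 (Cconj z2))) <->
   (forall z1 z2 w1 w4 : C,
      h (mk6 z1 z2 w1 0 0 w4) = f (mk6 w1 (Cconj w4) 0 z1 z2 0))).
Proof.
  intros f h E Rphi.
  assert (Hl2 : (0 < l2)%nat) by lia.
  destruct (pythagorean_separating_vector_R l1 l2 n2 Hl2 Hn2 Hpyth)
    as (a & b & c & Hab & Hc & Hsep).
  split; [| exact (f_h_symmetry_iff F)].
  apply (F_rotation_equivariant_iff l1 l2 n2) with (a := a) (b := b) (c := c); try assumption.
  - now apply lt_0_INR.
  - now apply lt_INR.
  - now apply lt_INR.
  - rewrite <- !mult_INR, <- plus_INR. now rewrite Hpyth.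
  - now apply pythagorean_hyp_neq_twice_leg_R with (l2 := l2).
Qed.
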